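(* For every integer $m\ge2$, $$\sum_{k=1}^\infty\frac{\binom{2k}{m}}{5^k(2k-1)k^2(2k+1)}=\frac{2(-1)^m}{m}\ln\frac54-(-1)^m2\sqrt5\ln\alpha+\frac{F_{m-1}}{m-1}\frac{1}{2^{m-1}}+\frac{F_m}{m}\frac1{2^m}$$ $$+\frac2m\sum_{j=1}^{\lfloor (m-1)/2\rfloor}\frac{L_{m-2j}}{m-2j}\frac{1}{2^{m-2j}}-\frac2m\sum_{j=1}^{\lceil (m-1)/2\rceil}\frac{L_{m-2j+1}}{m-2j+1}\frac{1}{2^{m-2j+1}}$$ $$-5\sum_{j=0}^{\lfloor (m-1)/2\rfloor}\frac{F_{m-2j}}{m-2j}\frac{1}{2^{m-2j}}+5\sum_{j=1}^{\lceil (m-1)/2\rceil}\frac{F_{m-2j+1}}{m-2j+1}\frac{1}{2^{m-2j+1}}.$$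
   Context: $F_n=(\alpha^n-\beta^n)/(\alpha-\beta)$ and $L_n=\alpha^n+\beta^n$ are the Fibonacci and Lucas numbers, with $\alpha=(1+\sqrt5)/2$, $\beta=(1-\sqrt5)/2$. Empty sums are $0$. *)

From Stdlib Require Import Reals Lra Lia List.
From Coquelicot Require Import Coquelicot.
Open Scope R_scope.

Definition alpha : R := (1 + sqrt 5) / 2.
Definition beta  : R := (1 - sqrt 5) / 2.

Definition Fib (n : nat) : R := (alpha ^ n - beta ^ n) / (alpha - beta).
Definition Luc (n : nat) : R := alpha ^ n + beta ^ n.

Fixpoint binom (n k : nat) : nat :=
  match n, k with
  | _, O => 1%nat
  | O, S _ => 0%nat
  | S n', S k' => (binom n' k' + binom n' k)%nat
  end.

(* sum_{j=a}^{b} f j, empty (= 0) when b < a *)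
Definition sumRange (a b : nat) (f : nat -> R) : R :=
  fold_right Rplus 0 (map f (seq a (S b - a))).

Definition term19 (m k : nat) : R :=
  INR (binom (2 * k) m) /
    (5 ^ k * (2 * INR k - 1) * (INR k) ^ 2 * (2 * INR k + 1)).

Definition rhs19 (m : nat) : R :=
  let M := INR m in
  2 * (-1) ^ m / M * ln (5 / 4)
  - (-1) ^ m * 2 * sqrt 5 * ln alpha
  + Fib (m - 1) / INR (m - 1) * / 2 ^ (m - 1)
  + Fib m / M * / 2 ^ m
  + 2 / M * sumRange 1 ((m - 1) / 2)
        (fun j => Luc (m - 2 * j) / INR (m - 2 * j) * / 2 ^ (m - 2 * j))
  - 2 / M * sumRange 1 (m / 2)
        (fun j => Luc (m - 2 * j + 1) / INR (m - 2 * j + 1) * / 2 ^ (m - 2 * j + 1))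
  - 5 * sumRange 0 ((m - 1) / 2)
        (fun j => Fib (m - 2 * j) / INR (m - 2 * j) * / 2 ^ (m - 2 * j))
  + 5 * sumRange 1 (m / 2)
        (fun j => Fib (m - 2 * j + 1) / INR (m - 2 * j + 1) * / 2 ^ (m - 2 * j + 1)).

From Stdlib Require Import Reals Lra Lia List.
From Coquelicot Require Import Coquelicot.
Open Scope R_scope.

(* With n = 2k, 1/((2k-1) k^2 (2k+1)) = -4/n^2 + 2/(n-1) - 2/(n+1), so the series is the even part
   at z = 1/sqrt 5 of sum_n C(n,m) (-4/n^2 + 2/(n-1) - 2/(n+1)) z^n.  Absorbing the denominators
   with (j+1) C(n+1,j+1) = (n+1) C(n,j) reduces the three pieces to sum_n C(n,j) z^n =
   z^j/(1-z)^(j+1) and to its integral sum_n C(n,j) z^(n+1)/(n+1), which the recurrence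
   C(n,j+1) = (n+1)/(j+1) C(n,j) - C(n,j) evaluates as (-1)^j (-ln(1-z)) plus an alternating sum
   of y^i/i, y = z/(1-z).  At z = 1/sqrt 5 and z = -1/sqrt 5 one has y = alpha/2 and y = beta/2;
   averaging the two closed forms yields the Fibonacci and Lucas numbers through Binet's formulas,
   and the logarithms combine into ln(5/4) and ln alpha. *)

Lemma binom_lt n k : (n < k)%nat -> binom n k = 0%nat.
Proof.
  revert k; induction n as [|n IH]; intros [|k] Hk; simpl; try lia.
  rewrite !IH by lia. reflexivity.
Qed.

Lemma binom_n_0 n : binom n 0 = 1%nat.
Proof. destruct n; reflexivity. Qed.

Lemma binom_succ n k : binom (S n) (S k) = (binom n k + binom n (S k))%nat.
Proof. reflexivity. Qed.

Lemma binom_succ_mul n k : (binom (S n) (S k) * S k = S n * binom n k)%nat.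
Proof.
  revert k; induction n as [|n IH]; intros k.
  - destruct k; reflexivity.
  - destruct k as [|k].
    + rewrite binom_succ, !binom_n_0. specialize (IH 0%nat). rewrite binom_n_0 in IH. lia.
    + rewrite (binom_succ (S n)), (binom_succ n k).
      pose proof (IH k). pose proof (IH (S k)). rewrite binom_succ in *. nia.
Qed.

Lemma binom_succ_INR n k :
  INR (binom (S n) (S k)) = INR (S n) * INR (binom n k) / INR (S k).
Proof.
  rewrite <- mult_INR, <- binom_succ_mul, mult_INR. field. apply not_0_INR. lia.
Qed.

Lemma binom_succ_r_INR n k :
  INR (binom n (S k)) = INR (S n) * INR (binom n k) / INR (S k) - INR (binom n k).
Proof. rewrite <- binom_succ_INR, binom_succ, plus_INR. ring. Qed.

Lemma sum_binom_upper k n :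
  sum_f_R0 (fun i => INR (binom i k)) n = INR (binom (S n) (S k)).
Proof.
  induction n as [|n IH].
  - simpl. rewrite Nat.add_0_r. reflexivity.
  - rewrite tech5, IH, (binom_succ (S n)), plus_INR. ring.
Qed.

Lemma is_series_ext_lim (a b : nat -> R) (l l' : R) :
  is_series a l -> (forall n, a n = b n) -> @eq R l l' -> is_series b l'.
Proof. intros Ha Hab <-. exact (is_series_ext a b l Hab Ha). Qed.

Lemma is_series_lin (a b : nat -> R) (la lb c d : R) :
  is_series a la -> is_series b lb -> is_series (fun n => c * a n + d * b n) (c * la + d * lb).
Proof.
  intros Ha Hb. exact (is_series_plus _ _ _ _ (is_series_scal_l c _ _ Ha) (is_series_scal_l d _ _ Hb)).
Qed.

Lemma is_series_shift (a : nat -> R) (l : R) :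
  a 0%nat = 0 -> is_series a l -> is_series (fun n => a (S n)) l.
Proof.
  intros H0 H. apply (@is_series_incr_1 R_AbsRing R_NormedModule).
  match goal with |- is_series _ ?L => replace L with l; [exact H|] end.
  rewrite H0. change (l = l + 0). ring.
Qed.

Lemma is_series_unshift (a : nat -> R) (l : R) :
  a 0%nat = 0 -> is_series (fun n => a (S n)) l -> is_series a l.
Proof.
  intros H0 H. apply is_series_decr_1.
  match goal with |- is_series _ ?L => replace L with l; [exact H|] end.
  rewrite H0. change (l = l + - 0). ring.
Qed.

Lemma is_series_pairs (a : nat -> R) (l : R) :
  is_series a l -> is_series (fun k => a (2 * k)%nat + a (S (2 * k))) l.
Proof.
  intros H.
  assert (Hsum : forall N, sum_n (fun k => a (2 * k)%nat + a (S (2 * k))) N = sum_n a (S (2 * N))).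
  { induction N as [|N IH].
    - rewrite sum_Sn, !sum_O. reflexivity.
    - rewrite sum_Sn, IH. replace (S (2 * S N)) with (S (S (S (2 * N)))) by lia.
      rewrite !sum_Sn. replace (2 * S N)%nat with (S (S (2 * N))) by lia.
      simpl. change plus with Rplus. ring. }
  unfold is_series. eapply filterlim_ext; [intros N; symmetry; apply Hsum|].
  apply (is_lim_seq_subseq (sum_n a) l (fun N => S (2 * N))); [|exact H].
  intros P [N HN]. exists N. intros n Hn. apply HN. lia.
Qed.

Lemma is_series_even_part (a : nat -> R) (z l1 l2 : R) :
  is_series (fun n => a n * z ^ n) l1 -> is_series (fun n => a n * (- z) ^ n) l2 ->
  is_series (fun k => a (2 * k)%nat * (z ^ 2) ^ k) ((l1 + l2) / 2).
Proof.
  intros H1 H2.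
  apply (is_series_ext_lim _ _ _ _ (is_series_pairs _ _ (is_series_lin _ _ _ _ (/ 2) (/ 2) H1 H2))).
  - intros k. cbv beta.
    rewrite <- !(tech_pow_Rmult _ (2 * k)), !pow_mult.
    replace ((- z) ^ 2) with (z ^ 2) by ring. field.
  - cbv beta. lra.
Qed.

Lemma Rabs_lt_1_sub_pos z : Rabs z < 1 -> 0 < 1 - z.
Proof. intros Hz. apply Rabs_def2 in Hz. lra. Qed.

Lemma is_series_binom_pow j z :
  Rabs z < 1 -> is_series (fun n => INR (binom n j) * z ^ n) (z ^ j / (1 - z) ^ S j).
Proof.
  revert z; induction j as [|j IH]; intros z Hz; pose proof (Rabs_lt_1_sub_pos z Hz) as Hz1.
  - apply (is_series_ext_lim _ _ _ _ (is_series_geom z Hz)).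
    + intros n. rewrite binom_n_0. simpl. ring.
    + simpl. field. lra.
  - assert (Habs : Rabs (Rabs z) < 1) by (rewrite Rabs_Rabsolu; exact Hz).
    assert (Hcauchy : is_series (fun n => sum_f_R0 (fun k => INR (binom k j) * z ^ k * z ^ (n - k)) n)
                        (z ^ j / (1 - z) ^ S j * / (1 - z))).
    { apply (is_series_mult _ _ _ _ (IH z Hz) (is_series_geom z Hz)).
      - exists (Rabs z ^ j / (1 - Rabs z) ^ S j).
        eapply is_series_ext; [|exact (IH _ Habs)]. intros n.
        rewrite Rabs_mult, RPow_abs, (Rabs_pos_eq (INR _)) by apply pos_INR. reflexivity.
      - exists (/ (1 - Rabs z)).
        eapply is_series_ext; [|exact (is_series_geom _ Habs)]. intros n. apply RPow_abs. }
    apply is_series_unshift; [simpl; ring|].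
    apply (is_series_ext_lim _ _ _ _ (is_series_scal_l z _ _ Hcauchy)).
    + intros n. cbv beta. change (scal z ?x) with (z * x).
      rewrite <- sum_binom_upper, (Rmult_comm (sum_f_R0 _ _)), !scal_sum.
      apply sum_eq. intros i Hi. simpl.
      replace (z ^ n) with (z ^ i * z ^ (n - i)) by (rewrite <- pow_add; f_equal; lia). ring.
    + change (z * (z ^ j / (1 - z) ^ S j * / (1 - z)) = z ^ S j / (1 - z) ^ S (S j)).
      simpl. field. split; [apply pow_nonzero|]; lra.
Qed.

Lemma CV_radius_inv_INR : CV_radius (fun n => / INR n) = 1.
Proof.
  rewrite <- CV_radius_derive, (CV_radius_ext _ (fun _ => 1)).
  - replace (Finite 1) with (Finite (/ 1)) by (f_equal; field).
    apply CV_radius_finite_DAlembert; [intros; lra|lra|].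
    eapply is_lim_seq_ext; [|apply is_lim_seq_const]. intros n. simpl.
    rewrite Rdiv_1_l, Rinv_1, Rabs_R1. reflexivity.
  - intros n. unfold PS_derive. field. apply not_0_INR. lia.
Qed.

(* The constant coefficient is [/ INR 0 = / 0 = 0]. *)
Lemma PSeries_inv_INR z : Rabs z < 1 -> PSeries (fun n => / INR n) z = - ln (1 - z).
Proof.
  intros Hz. set (a := fun n => / INR n).
  assert (Hderiv : forall t, Rabs t < 1 -> is_derive (fun t => PSeries a t + ln (1 - t)) t 0).
  { intros t Ht. pose proof (Rabs_lt_1_sub_pos t Ht) as Ht1.
    assert (Hgeom : PSeries (PS_derive a) t = / (1 - t)).
    { apply is_series_unique. eapply is_series_ext; [|exact (is_series_geom t Ht)].
      intros n. unfold PS_derive, a. rewrite Rinv_r by (apply not_0_INR; lia).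
      rewrite Rmult_1_l. reflexivity. }
    replace 0 with (PSeries (PS_derive a) t + (-1) * / (1 - t)) by (rewrite Hgeom; ring).
    apply (is_derive_plus (PSeries a) (fun t => ln (1 - t))).
    - apply is_derive_PSeries. unfold a. rewrite CV_radius_inv_INR. exact Ht.
    - auto_derive; [lra|]. field. lra. }
  destruct (MVT_cor4 (fun t => PSeries a t + ln (1 - t)) (fun _ => 0) 0 (Rabs z)) with (b := z)
    as [c [Hc _]].
  - intros c Hc. apply Hderiv. rewrite Rminus_0_r in Hc. lra.
  - rewrite Rminus_0_r. lra.
  - rewrite PSeries_0, Rminus_0_r, ln_1 in Hc. replace (a 0%nat) with 0 in Hc by (symmetry; apply Rinv_0).
    lra.
Qed.

Lemma is_series_log z : Rabs z < 1 -> is_series (fun n => z ^ S n / INR (S n)) (- ln (1 - z)).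
Proof.
  intros Hz. rewrite <- PSeries_inv_INR by exact Hz.
  assert (Hps : is_pseries (fun n => / INR n) z (PSeries (fun n => / INR n) z))
    by (apply PSeries_correct, CV_radius_inside; rewrite CV_radius_inv_INR; exact Hz).
  apply is_series_shift in Hps; [|simpl; rewrite Rinv_0; apply Rmult_0_r].
  eapply is_series_ext; [|exact Hps]. intros n. rewrite pow_n_pow. reflexivity.
Qed.

Fixpoint alt_sum (n : nat) (h : nat -> R) : R :=
  match n with O => 0 | S n' => h (S n') - alt_sum n' h end.

Definition log_binom (j : nat) (z : R) : R :=
  (-1) ^ j * - ln (1 - z) + alt_sum j (fun i => (z / (1 - z)) ^ i / INR i).

Lemma log_binom_succ j z :
  log_binom (S j) z = (z / (1 - z)) ^ S j / INR (S j) - log_binom j z.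
Proof. unfold log_binom. simpl. ring. Qed.

Lemma is_series_binom_pow_succ_div j z : Rabs z < 1 ->
  is_series (fun n => INR (binom n j) * z ^ S n / INR (S n)) (log_binom j z).
Proof.
  revert z; induction j as [|j IH]; intros z Hz.
  - apply (is_series_ext_lim _ _ _ _ (is_series_log z Hz)).
    + intros n. cbv beta. rewrite binom_n_0. change (INR 1) with 1. rewrite Rmult_1_l. reflexivity.
    + unfold log_binom. simpl. ring.
  - pose proof (Rabs_lt_1_sub_pos z Hz) as Hz1.
    assert (HSj : INR (S j) <> 0) by (apply not_0_INR; lia).
    apply (is_series_ext_lim _ _ _ _
             (is_series_lin _ _ _ _ (z / INR (S j)) (-1) (is_series_binom_pow j z Hz) (IH z Hz))).
    + intros n. rewrite binom_succ_r_INR, <- tech_pow_Rmult. field.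
      split; [exact HSj | apply not_0_INR; lia].
    + rewrite log_binom_succ. unfold Rdiv. rewrite Rpow_mult_distr, pow_inv, <- !tech_pow_Rmult.
      field. split; [|split]; [exact HSj | apply pow_nonzero; lra | lra].
Qed.

Lemma is_series_binom_div_sqr j z : Rabs z < 1 ->
  is_series (fun n => INR (binom n (S j)) * z ^ n / INR n ^ 2) (log_binom j z / INR (S j)).
Proof.
  intros Hz. apply is_series_unshift; [simpl; unfold Rdiv; ring|].
  apply (is_series_ext_lim _ _ _ _ (is_series_scal_r (/ INR (S j)) _ _ (is_series_binom_pow_succ_div j z Hz))).
  - intros n. cbv beta. change (scal ?a ?b) with (a * b).
    assert (HSn : INR (S n) <> 0) by (apply not_0_INR; lia).
    assert (HSj : INR (S j) <> 0) by (apply not_0_INR; lia).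
    rewrite binom_succ_INR, <- tech_pow_Rmult. field. split; assumption.
  - reflexivity.
Qed.

Lemma is_series_binom_div_pred j z : Rabs z < 1 ->
  is_series (fun n => INR (binom n (S (S j))) * z ^ n / (INR n - 1))
    ((z / (1 - z)) ^ S (S j) / INR (S (S j))
     + z * (z / (1 - z)) ^ S j / (INR (S j) * INR (S (S j)))).
Proof.
  intros Hz. pose proof (Rabs_lt_1_sub_pos z Hz) as Hz1.
  assert (HSj : INR (S j) <> 0) by (apply not_0_INR; lia).
  assert (HSSj : INR (S (S j)) <> 0) by (apply not_0_INR; lia).
  apply is_series_unshift; [simpl; unfold Rdiv; ring|].
  apply is_series_unshift; [rewrite binom_lt by lia; simpl; unfold Rdiv; ring|].
  assert (Hshift : is_series (fun q => INR (binom (S q) (S j)) * z ^ S q) (z ^ S j / (1 - z) ^ S (S j)))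
    by (apply (is_series_shift (fun n => INR (binom n (S j)) * z ^ n)); [simpl; ring|];
        apply is_series_binom_pow, Hz).
  apply (is_series_ext_lim _ _ _ _
           (is_series_lin _ _ _ _ (z / INR (S (S j))) (z ^ 2 / (INR (S j) * INR (S (S j))))
              Hshift (is_series_binom_pow j z Hz))).
  - intros q. cbv beta.
    assert (HSq : INR (S q) <> 0) by (apply not_0_INR; lia).
    rewrite !binom_succ_INR, <- !tech_pow_Rmult.
    replace (INR (S (S q)) - 1) with (INR (S q)) by (rewrite (S_INR (S q)); ring).
    rewrite (S_INR (S q)). field. repeat split; assumption.
  - unfold Rdiv. rewrite !Rpow_mult_distr, !pow_inv, <- !tech_pow_Rmult.
    field. repeat split; try assumption; try lra; apply pow_nonzero; lra.
Qed.

Lemma is_series_binom_div_succ j z : Rabs z < 1 -> z <> 0 ->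
  is_series (fun n => INR (binom n j) * z ^ n / (INR n + 1)) (log_binom j z / z).
Proof.
  intros Hz Hz0.
  apply (is_series_ext_lim _ _ _ _ (is_series_scal_r (/ z) _ _ (is_series_binom_pow_succ_div j z Hz))).
  - intros n. cbv beta. change (scal ?a ?b) with (a * b).
    rewrite S_INR, <- tech_pow_Rmult. field. split; [|exact Hz0].
    pose proof (pos_INR n). lra.
  - reflexivity.
Qed.

Definition partial_frac (n : nat) : R := -4 / INR n ^ 2 + 2 / (INR n - 1) - 2 / (INR n + 1).

Lemma term19_partial_frac m k :
  term19 m (S k) = INR (binom (2 * S k) m) * partial_frac (2 * S k) * (/ 5) ^ S k.
Proof.
  unfold term19, partial_frac. rewrite mult_INR, pow_inv. change (INR 2) with 2.
  assert (HK : 1 <= INR (S k)) by (rewrite S_INR; pose proof (pos_INR k); lra).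
  assert (5 ^ S k <> 0) by (apply pow_nonzero; lra).
  field. repeat split; lra.
Qed.

(* [-4 log_binom (p+1) z / (p+2) + 2 (sum for [/ (n - 1)]) - 2 log_binom (p+2) z / z],
   simplified with [log_binom_succ]. *)
Definition binom_partial_frac_sum (p : nat) (z : R) : R :=
  let m := INR (S (S p)) in
  let y := z / (1 - z) in
  (-1) ^ p * - ln (1 - z) * (4 / m - 2 * / z)
  + alt_sum (S p) (fun i => y ^ i / INR i) * (2 * / z - 4 / m)
  + 2 * (y ^ S (S p) * (1 - / z)) / m
  + 2 * z * y ^ S p / (INR (S p) * m).

Lemma is_series_binom_partial_frac p z : Rabs z < 1 -> z <> 0 ->
  is_series (fun n => INR (binom n (S (S p))) * partial_frac n * z ^ n) (binom_partial_frac_sum p z).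
Proof.
  intros Hz Hz0. pose proof (Rabs_lt_1_sub_pos z Hz) as Hz1.
  apply (is_series_ext_lim _ _ _ _
           (is_series_lin _ _ _ _ 1 (-2)
              (is_series_lin _ _ _ _ (-4) 2 (is_series_binom_div_sqr (S p) z Hz)
                 (is_series_binom_div_pred p z Hz))
              (is_series_binom_div_succ (S (S p)) z Hz Hz0))).
  - intros n. unfold partial_frac, Rdiv. ring.
  - rewrite (log_binom_succ (S p)). unfold binom_partial_frac_sum, log_binom. cbv zeta.
    assert (HSp : INR (S p) <> 0) by (apply not_0_INR; lia).
    assert (HSSp : INR (S (S p)) <> 0) by (apply not_0_INR; lia).
    rewrite <- !tech_pow_Rmult. field. repeat split; try assumption; lra.
Qed.

Lemma sumRange_0_l K f : sumRange 0 K f = f 0%nat + sumRange 1 K f.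
Proof.
  unfold sumRange. replace (S K - 0)%nat with (S K) by lia. replace (S K - 1)%nat with K by lia.
  reflexivity.
Qed.

Lemma sumRange_1_succ K f : sumRange 1 (S K) f = f 1%nat + sumRange 1 K (fun j => f (S j)).
Proof.
  unfold sumRange. replace (S (S K) - 1)%nat with (S K) by lia. replace (S K - 1)%nat with K by lia.
  simpl. rewrite <- seq_shift, map_map. reflexivity.
Qed.

Lemma sumRange_1_ext K f g :
  (forall j, (1 <= j <= K)%nat -> f j = g j) -> sumRange 1 K f = sumRange 1 K g.
Proof.
  intros Hfg. unfold sumRange. replace (S K - 1)%nat with K by lia.
  f_equal. apply map_ext_in. intros j Hj. apply in_seq in Hj. apply Hfg. lia.
Qed.

Lemma sumRange_alt_sum n h :
  sumRange 1 (S n / 2) (fun j => h (S n - 2 * j + 1)%nat)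
  - sumRange 1 (n / 2) (fun j => h (S n - 2 * j)%nat) = alt_sum n h.
Proof.
  induction n as [|n IH]; [unfold sumRange; simpl; ring|].
  simpl alt_sum. rewrite <- IH.
  replace (S (S n) / 2)%nat with (S (n / 2)).
  2:{ replace (S (S n)) with (n + 1 * 2)%nat by lia. rewrite Nat.div_add by lia. lia. }
  pose proof (Nat.Div0.mul_div_le n 2). pose proof (Nat.Div0.mul_div_le (S n) 2).
  rewrite sumRange_1_succ.
  replace (S (S n) - 2 * 1 + 1)%nat with (S n) by lia.
  rewrite (sumRange_1_ext (n / 2) (fun j => h (S (S n) - 2 * S j + 1)%nat) (fun j => h (S n - 2 * j)%nat))
    by (intros j Hj; f_equal; lia).
  rewrite (sumRange_1_ext (S n / 2) (fun j => h (S (S n) - 2 * j)%nat) (fun j => h (S n - 2 * j + 1)%nat))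
    by (intros j Hj; f_equal; lia).
  ring.
Qed.

Lemma sqrt5_sqr : sqrt 5 * sqrt 5 = 5.
Proof. apply sqrt_sqrt. lra. Qed.

Lemma sqrt5_gt_2 : 2 < sqrt 5.
Proof. pose proof sqrt5_sqr. pose proof (sqrt_pos 5). nra. Qed.

Lemma inv_sqrt5_bounds : 0 < / sqrt 5 < 1 / 2.
Proof.
  pose proof sqrt5_gt_2. split; [apply Rinv_0_lt_compat; lra|].
  apply (Rmult_lt_reg_l (sqrt 5)); [lra|]. rewrite Rinv_r by lra. lra.
Qed.

Lemma inv_sqrt5_sqr : (/ sqrt 5) ^ 2 = / 5.
Proof. rewrite pow_inv. simpl. rewrite Rmult_1_r, sqrt5_sqr. reflexivity. Qed.

Lemma alpha_sub_beta : alpha - beta = sqrt 5.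
Proof. unfold alpha, beta. field. Qed.

Lemma alpha_mul_beta : alpha * beta = -1.
Proof. unfold alpha, beta. pose proof sqrt5_sqr. nra. Qed.

Lemma div_one_sub_inv_sqrt5 : / sqrt 5 / (1 - / sqrt 5) = alpha / 2.
Proof. pose proof sqrt5_gt_2. pose proof sqrt5_sqr. unfold alpha. field_simplify_eq; [nra|lra]. Qed.

Lemma div_one_add_inv_sqrt5 : - / sqrt 5 / (1 - - / sqrt 5) = beta / 2.
Proof. pose proof sqrt5_gt_2. pose proof sqrt5_sqr. unfold beta. field_simplify_eq; [nra|lra]. Qed.

Lemma ln_5_4 : ln (5 / 4) = - ln (1 - / sqrt 5) - ln (1 - - / sqrt 5).
Proof.
  pose proof sqrt5_sqr. pose proof inv_sqrt5_bounds.
  replace (5 / 4) with (/ ((1 - / sqrt 5) * (1 - - / sqrt 5))).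
  - rewrite ln_Rinv, ln_mult by (try apply Rmult_lt_0_compat; lra). ring.
  - pose proof sqrt5_gt_2. field_simplify_eq; [nra|split; lra].
Qed.

Lemma ln_alpha : ln alpha = (ln (1 - - / sqrt 5) - ln (1 - / sqrt 5)) / 2.
Proof.
  pose proof sqrt5_sqr. pose proof sqrt5_gt_2. pose proof inv_sqrt5_bounds.
  assert (Halpha : 0 < alpha) by (unfold alpha; lra).
  replace (1 - - / sqrt 5) with (alpha * alpha * (1 - / sqrt 5)).
  - rewrite !ln_mult by (try apply Rmult_lt_0_compat; lra). field.
  - unfold alpha. field_simplify_eq; [nra|lra].
Qed.

Lemma half_alpha_pow_succ i : (alpha / 2) ^ S i * (1 - sqrt 5) = - (alpha / 2) ^ i.
Proof.
  replace (1 - sqrt 5) with (2 * beta) by (unfold beta; field).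
  rewrite <- tech_pow_Rmult.
  transitivity ((alpha * beta) * (alpha / 2) ^ i); [field|].
  rewrite alpha_mul_beta. ring.
Qed.

Lemma half_beta_pow_succ i : (beta / 2) ^ S i * (1 - - sqrt 5) = - (beta / 2) ^ i.
Proof.
  replace (1 - - sqrt 5) with (2 * alpha) by (unfold alpha; field).
  rewrite <- tech_pow_Rmult.
  transitivity ((alpha * beta) * (beta / 2) ^ i); [field|].
  rewrite alpha_mul_beta. ring.
Qed.

Definition golden_term (x : R) (i : nat) : R := (x / 2) ^ i / INR i.
Definition fib_term (i : nat) : R := Fib i / INR i * / 2 ^ i.
Definition luc_term (i : nat) : R := Luc i / INR i * / 2 ^ i.

Lemma fib_term_golden i : fib_term i = (golden_term alpha i - golden_term beta i) / sqrt 5.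
Proof.
  pose proof sqrt5_gt_2. unfold fib_term, golden_term, Fib. rewrite alpha_sub_beta.
  unfold Rdiv. rewrite !Rpow_mult_distr, !pow_inv. set (k := / INR i).
  field. split; [lra|apply pow_nonzero; lra].
Qed.

Lemma luc_term_golden i : luc_term i = golden_term alpha i + golden_term beta i.
Proof. unfold luc_term, golden_term, Luc, Rdiv. rewrite !Rpow_mult_distr, !pow_inv. ring. Qed.

Lemma alt_sum_fib_term n :
  alt_sum n fib_term = (alt_sum n (golden_term alpha) - alt_sum n (golden_term beta)) / sqrt 5.
Proof.
  pose proof sqrt5_gt_2.
  induction n as [|n IH]; simpl; [field; lra|]. rewrite IH, fib_term_golden. field. lra.
Qed.

Lemma alt_sum_luc_term n :
  alt_sum n luc_term = alt_sum n (golden_term alpha) + alt_sum n (golden_term beta).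
Proof. induction n as [|n IH]; simpl; [ring|]. rewrite IH, luc_term_golden. ring. Qed.

Lemma rhs19_alt_sum p :
  rhs19 (S (S p)) =
  (-1) ^ p * (2 / INR (S (S p)) * ln (5 / 4) - 2 * sqrt 5 * ln alpha)
  + fib_term (S p) - 4 * fib_term (S (S p))
  - 2 / INR (S (S p)) * alt_sum (S p) luc_term + 5 * alt_sum (S p) fib_term.
Proof.
  pose proof (sumRange_alt_sum (S p) luc_term) as Hluc.
  pose proof (sumRange_alt_sum (S p) fib_term) as Hfib.
  unfold luc_term, fib_term in *. unfold rhs19. cbv zeta.
  replace (S (S p) - 1)%nat with (S p) by lia.
  rewrite sumRange_0_l. replace (S (S p) - 2 * 0)%nat with (S (S p)) by lia.
  rewrite <- Hluc, <- Hfib. rewrite <- !tech_pow_Rmult. unfold Rdiv. ring.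
Qed.

Lemma binom_partial_frac_sum_even_part p :
  (binom_partial_frac_sum p (/ sqrt 5) + binom_partial_frac_sum p (- / sqrt 5)) / 2 = rhs19 (S (S p)).
Proof.
  pose proof sqrt5_gt_2. pose proof sqrt5_sqr as Hsqr.
  rewrite rhs19_alt_sum, alt_sum_luc_term, alt_sum_fib_term, !fib_term_golden, ln_5_4, ln_alpha.
  unfold binom_partial_frac_sum. cbv zeta.
  rewrite div_one_sub_inv_sqrt5, div_one_add_inv_sqrt5, Rinv_opp, Rinv_inv.
  rewrite half_alpha_pow_succ, half_beta_pow_succ.
  unfold golden_term. rewrite <- !(tech_pow_Rmult _ (S p)).
  set (U := (alpha / 2) ^ S p). set (V := (beta / 2) ^ S p).
  (* With [alpha * beta = -1] already used, writing the remaining [5] as [s * s] leaves an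
     identity of rational functions in [s = sqrt 5]. *)
  unfold alpha, beta. set (s := sqrt 5) in *. rewrite <- Hsqr.
  rewrite !S_INR. pose proof (pos_INR p).
  field. repeat split; lra.
Qed.

Theorem theorem19 (m : nat) (hm : (2 <= m)%nat) :
  is_series (fun n : nat => term19 m (S n)) (rhs19 m).
Proof.
  destruct m as [|[|p]]; [lia|lia|].
  pose proof inv_sqrt5_bounds as Hz.
  assert (Hpos : Rabs (/ sqrt 5) < 1) by (rewrite Rabs_pos_eq; lra).
  assert (Hneg : Rabs (- / sqrt 5) < 1) by (rewrite Rabs_Ropp; exact Hpos).
  pose proof (is_series_even_part _ _ _ _
                (is_series_binom_partial_frac p _ Hpos ltac:(lra))
                (is_series_binom_partial_frac p _ Hneg ltac:(lra))) as Heven.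
  rewrite binom_partial_frac_sum_even_part, inv_sqrt5_sqr in Heven.
  apply is_series_shift in Heven; [|simpl; ring].
  eapply is_series_ext; [|exact Heven]. intros k. symmetry. apply term19_partial_frac.
Qed.
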